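(* Let $C\subset\mathbb{C}$. Then $C$ is disconnected if and only if there is a closed connected set $A\subset\mathbb{C}$ that disconnects $C$.
   Context: A set $A\subset\mathbb{C}$ disconnects $C\subset\mathbb{C}$ if $C\cap A=\emptyset$ and at least two different connected components of $\mathbb{C}\setminus A$ intersect $C$. *)

From Stdlib Require Import Reals.
Open Scope R_scope.

Definition Cplx := (R * R)%type.

Definition cdist (z w : Cplx) : R :=
  sqrt ((fst z - fst w) ^ 2 + (snd z - snd w) ^ 2).

Definition is_open (U : Cplx -> Prop) : Prop :=
  forall z, U z -> exists eps, 0 < eps /\ forall w, cdist z w < eps -> U w.

Definition is_closed (A : Cplx -> Prop) : Prop :=
  is_open (fun z => ~ A z).

(* S is connected (in the subspace topology): no two open sets of C
   separate S into two nonempty disjoint relatively open pieces. *)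
Definition connected (S : Cplx -> Prop) : Prop :=
  ~ exists U V : Cplx -> Prop,
      is_open U /\ is_open V /\
      (forall z, S z -> U z \/ V z) /\
      (exists z, S z /\ U z) /\ (exists z, S z /\ V z) /\
      (forall z, S z -> U z -> V z -> False).

Definition component (X : Cplx -> Prop) (x : Cplx) : Cplx -> Prop :=
  fun y => exists K : Cplx -> Prop,
    (forall z, K z -> X z) /\ connected K /\ K x /\ K y.

Definition is_component (X K : Cplx -> Prop) : Prop :=
  exists x, X x /\ forall y, K y <-> component X x y.

Definition disconnects (A C : Cplx -> Prop) : Prop :=
  (forall z, C z -> ~ A z) /\
  exists K1 K2 : Cplx -> Prop,
    is_component (fun z => ~ A z) K1 /\
    is_component (fun z => ~ A z) K2 /\
    ~ (forall z, K1 z <-> K2 z) /\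
    (exists z, C z /\ K1 z) /\ (exists z, C z /\ K2 z).

(* Converse: the components of the open set C \ A are open, so the one
   meeting C and the union of the others separate C.
   Direct: given a separation (U, V) of C at p and q, take an open
   neighbourhood G of C /\ U whose closure misses C /\ V, the component P
   of G at p, the component W at q of the complement of the closure of P,
   and A the frontier of W.  A is closed, lies in the closure of P outside
   G (so misses C) and separates p from q.  A is connected by unicoherence
   of the plane: a separation of A yields a Urysohn function g, 0 and 1 on
   the two pieces; exp (2 pi i g) on the closure of W, extended by 1, is a
   continuous map to the circle, so it has a continuous logarithm th
   (lifting theorem); th is constant on P and th - 2 pi g is constant on W,
   and both constancies reach A, forcing g to be constant on A. *)
From Stdlib Require Import Reals Lra Lia Psatz Classical ClassicalEpsilon ZArith.
Open Scope R_scope.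

Definition sqdist (z w : Cplx) : R := (fst z - fst w) ^ 2 + (snd z - snd w) ^ 2.

Lemma sqdist_nonneg z w : 0 <= sqdist z w.
Proof.
unfold sqdist. pose proof (pow2_ge_0 (fst z - fst w)).
pose proof (pow2_ge_0 (snd z - snd w)). lra.
Qed.

Lemma cdist_nonneg z w : 0 <= cdist z w.
Proof. apply sqrt_pos. Qed.

Lemma cdist_sym z w : cdist z w = cdist w z.
Proof. unfold cdist; f_equal; ring. Qed.

Lemma cdist_refl z : cdist z z = 0.
Proof.
unfold cdist.
replace ((fst z - fst z) ^ 2 + (snd z - snd z) ^ 2) with 0 by ring.
apply sqrt_0.
Qed.

Lemma cdist_sq z w : cdist z w ^ 2 = sqdist z w.
Proof. unfold cdist. apply pow2_sqrt, sqdist_nonneg. Qed.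

Lemma cdist_lt z w e : 0 < e -> (cdist z w < e <-> sqdist z w < e ^ 2).
Proof.
intros He. pose proof (cdist_nonneg z w). rewrite <- cdist_sq. split; intro Hlt.
- nra.
- destruct (Rlt_le_dec (cdist z w) e); auto. nra.
Qed.

Lemma cdist_le z w e : 0 <= e -> (cdist z w <= e <-> sqdist z w <= e ^ 2).
Proof.
intros He. pose proof (cdist_nonneg z w). rewrite <- cdist_sq. split; intro Hlt.
- nra.
- destruct (Rle_lt_dec (cdist z w) e); auto. nra.
Qed.

(* The triangle inequality, via Cauchy-Schwarz for the two coordinates. *)
Lemma cdist_tri z w u : cdist z u <= cdist z w + cdist w u.
Proof.
pose proof (cdist_nonneg z w) as H1. pose proof (cdist_nonneg w u) as H2.
apply cdist_le; [lra|].
pose proof (cdist_sq z w) as E1. pose proof (cdist_sq w u) as E2. unfold sqdist in *.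
set (a := cdist z w) in *. set (b := cdist w u) in *.
set (x1 := fst z - fst w) in *. set (x2 := snd z - snd w) in *.
set (y1 := fst w - fst u) in *. set (y2 := snd w - snd u) in *.
replace (fst z - fst u) with (x1 + y1) by (unfold x1, y1; ring).
replace (snd z - snd u) with (x2 + y2) by (unfold x2, y2; ring).
assert (CS : x1 * y1 + x2 * y2 <= a * b).
{ destruct (Rle_lt_dec (x1 * y1 + x2 * y2) 0); [nra|].
  assert (Hsq : (x1 * y1 + x2 * y2) ^ 2 <= (a * b) ^ 2).
  { replace ((a * b) ^ 2) with (a ^ 2 * b ^ 2) by ring. rewrite E1, E2.
    pose proof (pow2_ge_0 (x1 * y2 - x2 * y1)). nra. }
  assert (0 <= a * b) by (apply Rmult_le_pos; auto). nra. }
nra.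
Qed.

Lemma cdist_tri3 a b c d : cdist a d <= cdist a b + cdist b c + cdist c d.
Proof. pose proof (cdist_tri a b d). pose proof (cdist_tri b c d). lra. Qed.

Definition ball (c : Cplx) (r : R) : Cplx -> Prop := fun w => cdist c w < r.

Lemma ball_center c r : 0 < r -> ball c r c.
Proof. intros Hr. unfold ball. rewrite cdist_refl. exact Hr. Qed.

Definition closure (S : Cplx -> Prop) : Cplx -> Prop :=
  fun z => forall e, 0 < e -> exists w, S w /\ cdist z w < e.

Lemma closure_incl S z : S z -> closure S z.
Proof. intros H e He. exists z. rewrite cdist_refl. auto. Qed.

Lemma closure_mono (S T : Cplx -> Prop) :
  (forall z, S z -> T z) -> forall z, closure S z -> closure T z.
Proof. intros HST z Hz e He. destruct (Hz e He) as [w [Sw Hw]]. eauto. Qed.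

Lemma closure_closed S : is_closed (closure S).
Proof.
intros z Hz. apply not_all_ex_not in Hz. destruct Hz as [e He].
apply imply_to_and in He. destruct He as [He Hn].
exists (e / 2). split; [lra|]. intros w Hw Hc.
destruct (Hc (e / 2)) as [u [Su Hu]]; [lra|].
apply Hn. exists u. split; auto. pose proof (cdist_tri z w u). lra.
Qed.

Lemma open_closure_disj U S : is_open U -> (forall z, U z -> S z -> False) ->
  forall z, U z -> closure S z -> False.
Proof.
intros HU H z Uz Cz. destruct (HU z Uz) as [e [He He']].
destruct (Cz e He) as [w [Sw Hw]]. exact (H w (He' w Hw) Sw).
Qed.

(* The frontier of an open set W consists of the limit points outside W. *)
Definition frontier (W : Cplx -> Prop) : Cplx -> Prop := fun z => closure W z /\ ~ W z.

Lemma frontier_closed W : is_open W -> is_closed (frontier W).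
Proof.
unfold frontier.
intros Wo z Hz. destruct (classic (W z)) as [Wz|Wz].
- destruct (Wo z Wz) as [r [Hr Hr']]. exists r. split; auto.
  intros w Hw [_ Hn]. auto.
- assert (Hcz : ~ closure W z) by tauto.
  destruct (closure_closed W z Hcz) as [r [Hr Hr']]. exists r. split; auto.
  intros w Hw [Hcw _]. exact (Hr' w Hw Hcw).
Qed.

Lemma connected_from_point (S : Cplx -> Prop) x0 :
  S x0 ->
  (forall y, S y -> exists K, connected K /\ (forall z, K z -> S z) /\ K x0 /\ K y) ->
  connected S.
Proof.
intros Sx0 H [U [V [HU [HV [Hc [[u [Su Uu]] [[v [Sv Vv]] Hd]]]]]]].
destruct (Hc x0 Sx0) as [Ux|Vx].
- destruct (H v Sv) as [K [HK [KS [Kx Kv]]]]. apply HK. exists U, V.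
  repeat split; auto; eauto.
- destruct (H u Su) as [K [HK [KS [Kx Ku]]]]. apply HK. exists U, V.
  repeat split; auto; eauto.
Qed.

Lemma connected_empty (S : Cplx -> Prop) : (forall z, ~ S z) -> connected S.
Proof. intros H [U [V [_ [_ [_ [[u [Su _]] _]]]]]]. exact (H u Su). Qed.

Lemma connected_single x : connected (fun z => z = x).
Proof.
intros [U [V [_ [_ [_ [[u [Su Uu]] [[v [Sv Vv]] Hd]]]]]]]. subst.
exact (Hd x eq_refl Uu Vv).
Qed.

Lemma connected_union2 (K1 K2 : Cplx -> Prop) z0 :
  connected K1 -> connected K2 -> K1 z0 -> K2 z0 ->
  connected (fun z => K1 z \/ K2 z).
Proof.
intros H1 H2 H1z H2z. apply (connected_from_point _ z0); auto.
intros y [Hy|Hy]; [exists K1 | exists K2]; repeat split; auto.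
Qed.

Lemma continuity_induction (Q : R -> Prop) :
  (forall m, 0 <= m <= 1 -> (forall s, 0 <= s < m -> Q s) ->
     exists eta, 0 < eta /\ forall s, 0 <= s <= 1 -> s < m + eta -> Q s) ->
  forall s, 0 <= s <= 1 -> Q s.
Proof.
intros H.
set (E := fun s => 0 <= s <= 1 /\ forall t, 0 <= t <= s -> Q t).
destruct (H 0) as [e0 [He0 H0]]; [lra | intros; lra|].
assert (bE : bound E) by (exists 1; intros x [Hx _]; lra).
assert (E0 : E 0) by (split; [lra | intros t Ht; apply H0; lra]).
destruct (completeness E bE (ex_intro _ 0 E0)) as [m [Hub Hlub]].
assert (m0 : 0 <= m) by (apply Hub; auto).
assert (m1 : m <= 1) by (apply Hlub; intros x [Hx _]; lra).
assert (Hbelow : forall s, 0 <= s < m -> Q s).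
{ intros s Hs. destruct (classic (exists x, E x /\ s < x)) as [[x [[_ Ex] Hx]]|Hn].
  - apply Ex; lra.
  - assert (m <= s); [|lra]. apply Hlub. intros x Ex.
    destruct (Rle_lt_dec x s); auto. exfalso; eauto. }
destruct (H m (conj m0 m1) Hbelow) as [eta [Heta Hm]].
assert (m = 1).
{ destruct (Rle_lt_dec 1 m); [lra|].
  assert (HE : E (Rmin 1 (m + eta / 2))).
  { pose proof (Rmin_l 1 (m + eta / 2)). pose proof (Rmin_r 1 (m + eta / 2)).
    split; [split; [apply Rmin_glb; lra | auto]|]. intros t Ht. apply Hm; lra. }
  apply Hub in HE. unfold Rmin in HE. destruct (Rle_dec 1 (m + eta / 2)); lra. }
intros s Hs. apply Hm; lra.
Qed.

Definition segpt (z w : Cplx) (t : R) : Cplx :=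
  (fst z + t * (fst w - fst z), snd z + t * (snd w - snd z)).

Lemma segpt0 z w : segpt z w 0 = z.
Proof. destruct z; unfold segpt; simpl; f_equal; ring. Qed.

Lemma segpt1 z w : segpt z w 1 = w.
Proof. destruct w; unfold segpt; simpl; f_equal; ring. Qed.

Lemma cdist_segpt z w s t :
  cdist (segpt z w s) (segpt z w t) = Rabs (s - t) * cdist z w.
Proof.
unfold cdist, segpt; cbn [fst snd].
replace ((fst z + s * (fst w - fst z) - (fst z + t * (fst w - fst z))) ^ 2 +
   (snd z + s * (snd w - snd z) - (snd z + t * (snd w - snd z))) ^ 2) with
  (Rabs (s - t) ^ 2 * ((fst z - fst w) ^ 2 + (snd z - snd w) ^ 2))
  by (rewrite pow2_abs; ring).
rewrite sqrt_mult, sqrt_pow2; auto using Rabs_pos, pow2_ge_0.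
pose proof (pow2_ge_0 (fst z - fst w)). pose proof (pow2_ge_0 (snd z - snd w)). lra.
Qed.

Definition segment (z w : Cplx) : Cplx -> Prop :=
  fun y => exists t, 0 <= t <= 1 /\ y = segpt z w t.

Lemma segment_stays z w (U V : Cplx -> Prop) : is_open U -> is_open V ->
  (forall t, 0 <= t <= 1 -> U (segpt z w t) \/ V (segpt z w t)) ->
  (forall t, 0 <= t <= 1 -> U (segpt z w t) -> V (segpt z w t) -> False) -> U z ->
  forall t, 0 <= t <= 1 -> U (segpt z w t).
Proof.
intros HU HV Hc Hd Uz. apply continuity_induction. intros m Hm Hb.
pose proof (cdist_nonneg z w) as Hd0.
destruct (Hc m Hm) as [Um|Vm].
- destruct (HU _ Um) as [r [Hr Hr']]. exists (r / (cdist z w + 1)).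
  split; [apply Rdiv_lt_0_compat; lra|].
  intros s Hs Hsm. destruct (Rlt_le_dec s m); [apply Hb; lra|].
  apply Hr'. rewrite cdist_segpt, Rabs_minus_sym, Rabs_right by lra.
  assert (Hsm' : (s - m) * (cdist z w + 1) < r).
  { apply Rmult_lt_reg_r with (/ (cdist z w + 1)); [apply Rinv_0_lt_compat; lra|].
    rewrite Rmult_assoc, Rinv_r by lra. unfold Rdiv in Hsm. lra. }
  nra.
- exfalso. destruct (HV _ Vm) as [r [Hr Hr']].
  destruct (Req_dec m 0) as [->|Hm0].
  { apply (Hd 0); [lra | rewrite segpt0; auto | auto]. }
  set (k := r / (2 * (cdist z w + 1))).
  assert (Hk : 0 < k) by (apply Rdiv_lt_0_compat; lra).
  assert (Hkr : k * cdist z w < r).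
  { unfold k. apply Rmult_lt_reg_r with (2 * (cdist z w + 1)); [lra|].
    replace (r / (2 * (cdist z w + 1)) * cdist z w * (2 * (cdist z w + 1)))
      with (r * cdist z w) by (field; lra). nra. }
  set (s := Rmax 0 (m - k)).
  assert (Hs : 0 <= s < m /\ m - s <= k).
  { unfold s, Rmax. destruct (Rle_dec 0 (m - k)); lra. }
  apply (Hd s); [lra | apply Hb; lra|]. apply Hr'.
  rewrite cdist_segpt, Rabs_right by lra. nra.
Qed.

Lemma segment_connected z w : connected (segment z w).
Proof.
intros [U [V [HU [HV [Hc [[u [Su Uu]] [[v [Sv Vv]] Hd]]]]]]].
assert (Hc' : forall t, 0 <= t <= 1 -> U (segpt z w t) \/ V (segpt z w t)).
{ intros t Ht. apply Hc. exists t; auto. }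
assert (Hd' : forall t, 0 <= t <= 1 -> U (segpt z w t) -> V (segpt z w t) -> False).
{ intros t Ht. apply Hd. exists t; auto. }
destruct (Hc' 0 ltac:(lra)) as [U0|V0]; rewrite segpt0 in *.
- destruct Sv as [t [Ht ->]]. apply (Hd' t Ht); auto.
  apply (segment_stays z w U V); auto.
- destruct Su as [t [Ht ->]]. apply (Hd' t Ht); auto.
  apply (segment_stays z w V U); auto.
  + intros t' Ht'. destruct (Hc' t' Ht'); auto.
  + intros t' Ht' H1 H2. exact (Hd' t' Ht' H2 H1).
Qed.

(* Balls are connected, being star-shaped around their centre. *)
Lemma ball_connected c r : connected (ball c r).
Proof.
destruct (Rlt_le_dec 0 r) as [Hr|Hr].
2:{ apply connected_empty. intros z Hz. unfold ball in Hz.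
    pose proof (cdist_nonneg c z). lra. }
apply (connected_from_point _ c); [apply ball_center; auto|].
intros y Hy. exists (segment c y). split; [apply segment_connected|]. split.
- intros z [t [Ht ->]]. unfold ball in *. rewrite <- (segpt0 c y) at 1.
  rewrite cdist_segpt, Rabs_left1 by lra. pose proof (cdist_nonneg c y). nra.
- split; [exists 0 | exists 1]; rewrite ?segpt0, ?segpt1; split; auto; lra.
Qed.

Lemma component_sub X x y : component X x y -> X y.
Proof. intros [K [KX [_ [_ Ky]]]]. auto. Qed.

Lemma component_self X x : X x -> component X x x.
Proof.
intros Hx. exists (fun z => z = x). repeat split; auto.
- intros z ->; auto.
- apply connected_single.
Qed.

Lemma component_base X x y : component X x y -> component X x x.
Proof. intros [K [KX [HK [Kx _]]]]. exists K; auto. Qed.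

Lemma component_connected X x : connected (component X x).
Proof.
destruct (classic (exists y, component X x y)) as [[y Hy]|Hn].
- apply (connected_from_point _ x); [exact (component_base _ _ _ Hy)|].
  intros z [K [KX [HK [Kx Kz]]]]. exists K. repeat split; auto.
  intros u Ku. exists K; auto.
- apply connected_empty. intros z Hz; eauto.
Qed.

Lemma component_absorb X x (K : Cplx -> Prop) : connected K -> (forall z, K z -> X z) ->
  (exists z, K z /\ component X x z) -> forall z, K z -> component X x z.
Proof.
intros HK KX [z0 [Kz0 [K0 [K0X [HK0 [K0x K0z0]]]]]] z Kz.
exists (fun w => K w \/ K0 w). repeat split.
- intros w [Hw|Hw]; auto.
- apply (connected_union2 K K0 z0); auto.
- right; auto.
- left; auto.
Qed.

Lemma component_absorb_ball X x c r : (forall z, ball c r z -> X z) ->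
  (exists z, ball c r z /\ component X x z) -> forall z, ball c r z -> component X x z.
Proof. apply component_absorb, ball_connected. Qed.

Lemma component_open X x : is_open X -> is_open (component X x).
Proof.
intros HX y Hy. destruct (HX y (component_sub _ _ _ Hy)) as [r [Hr Hr']].
exists r. split; auto. apply (component_absorb_ball X x y r); auto.
exists y. split; auto. apply ball_center; auto.
Qed.

Lemma component_eq X x y : component X x y -> forall w, component X x w <-> component X y w.
Proof.
intros Hy. assert (Xy : X y) by exact (component_sub _ _ _ Hy).
intros w. split; intro Hw.
- apply (component_absorb X y (component X x)); auto using component_connected.
  + intros; eapply component_sub; eauto.
  + exists y. split; auto. apply component_self; auto.
- apply (component_absorb X x (component X y)); auto using component_connected.
  + intros; eapply component_sub; eauto.
  + exists y. split; auto. apply component_self; auto.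
Qed.

Lemma component_compl_open X x :
  is_open X -> is_open (fun z => X z /\ ~ component X x z).
Proof.
intros HX z [Xz Nz]. destruct (HX z Xz) as [r [Hr Hr']]. exists r. split; auto.
intros w Hw. split; auto. intro Cw. apply Nz.
apply (component_absorb_ball X x z r); auto; [exists w; split; auto | apply ball_center; auto].
Qed.

(* The converse direction: the component of C \ A meeting C and the union
   of the other components separate C. *)
Lemma disconnects_disconnected C A : is_closed A -> disconnects A C -> ~ connected C.
Proof.
intros HA [HCA [K1 [K2 [[x1 [Ax1 H1]] [[x2 [Ax2 H2]]
  [Hne [[z1 [Cz1 K1z1]] [z2 [Cz2 K2z2]]]]]]]]] Hconn.
set (X := fun z => ~ A z).
assert (Hz2 : ~ component X x1 z2).
{ intro Hc. apply Hne. intro w. rewrite H1, H2. apply H2 in K2z2.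
  pose proof (component_eq X x1 z2 Hc w). pose proof (component_eq X x2 z2 K2z2 w).
  unfold X in *. tauto. }
apply Hconn. exists (component X x1), (fun z => X z /\ ~ component X x1 z).
repeat split.
- apply component_open. exact HA.
- apply component_compl_open. exact HA.
- intros z Cz. destruct (classic (component X x1 z)); auto.
  right; split; auto. apply HCA; auto.
- exists z1; split; auto. apply H1; auto.
- exists z2. repeat split; auto. apply HCA; auto.
- intros z _ Hz [_ Hn]; auto.
Qed.

Definition cts (f : Cplx -> R) : Prop := forall z e, 0 < e -> exists d, 0 < d /\
  forall w, cdist z w < d -> Rabs (f w - f z) < e.

Lemma cts_lin f g a : cts f -> cts g -> cts (fun z => f z + a * g z).
Proof.
intros Hf Hg z e He.
destruct (Hf z (e / 2)) as [d1 [Hd1 H1]]; [lra|].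
assert (Ha : 0 < Rabs a + 1) by (pose proof (Rabs_pos a); lra).
destruct (Hg z (e / (2 * (Rabs a + 1)))) as [d2 [Hd2 H2]].
{ apply Rdiv_lt_0_compat; lra. }
exists (Rmin d1 d2). split; [apply Rmin_pos; auto|]. intros w Hw.
pose proof (Rmin_l d1 d2). pose proof (Rmin_r d1 d2).
specialize (H1 w ltac:(lra)). specialize (H2 w ltac:(lra)).
replace (f w + a * g w - (f z + a * g z)) with ((f w - f z) + a * (g w - g z)) by ring.
eapply Rle_lt_trans; [apply Rabs_triang|]. rewrite Rabs_mult.
assert (Rabs a * Rabs (g w - g z) <= (Rabs a + 1) * (e / (2 * (Rabs a + 1)))).
{ apply Rmult_le_compat; auto using Rabs_pos; lra. }
replace ((Rabs a + 1) * (e / (2 * (Rabs a + 1)))) with (e / 2) in * by (field; lra).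
lra.
Qed.

Lemma cts_closure h (S : Cplx -> Prop) c : cts h -> (forall z, S z -> h z = c) ->
  forall z, closure S z -> h z = c.
Proof.
intros Hh HS z Hz. apply NNPP. intro Hn.
assert (He : 0 < Rabs (h z - c)) by (apply Rabs_pos_lt; lra).
destruct (Hh z _ He) as [d [Hd Hd']]. destruct (Hz d Hd) as [w [Sw Hw]].
specialize (Hd' w Hw). rewrite HS, Rabs_minus_sym in Hd' by auto. lra.
Qed.

Lemma sin_zero_gap x : sin x = 0 -> x = 0 \/ 3 < Rabs x.
Proof.
intros H. destruct (sin_eq_0_0 x H) as [k ->]. pose proof PI2_3_2.
destruct (Z.eq_dec k 0) as [->|Hk]; [left; simpl; ring|].
right. rewrite Rabs_mult, (Rabs_right PI) by lra.
assert (1 <= Rabs (IZR k)).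
{ destruct (Z_le_gt_dec k 0) as [Hle|Hgt].
  - assert (Hk' : (k <= -1)%Z) by lia. apply IZR_le in Hk'.
    rewrite Rabs_left1 by lra. simpl in Hk'. lra.
  - assert (Hk' : (1 <= k)%Z) by lia. apply IZR_le in Hk'.
    rewrite Rabs_right by lra. lra. }
nra.
Qed.

Lemma cts_angle_const (K : Cplx -> Prop) h : connected K -> cts h ->
  forall z0, K z0 -> (forall z, K z -> sin (h z - h z0) = 0) ->
  forall z, K z -> h z = h z0.
Proof.
intros HK Hh z0 Kz0 Hs z Kz.
destruct (sin_zero_gap _ (Hs z Kz)) as [E|E]; [lra|]. exfalso. apply HK.
exists (fun w => Rabs (h w - h z0) < 1), (fun w => 1 < Rabs (h w - h z0)). repeat split.
- intros w Hw. destruct (Hh w (1 - Rabs (h w - h z0))) as [d [Hd Hd']]; [lra|].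
  exists d. split; auto. intros u Hu. specialize (Hd' u Hu).
  pose proof (Rabs_triang (h u - h w) (h w - h z0)) as T.
  replace (h u - h w + (h w - h z0)) with (h u - h z0) in T by ring. lra.
- intros w Hw. destruct (Hh w (Rabs (h w - h z0) - 1)) as [d [Hd Hd']]; [lra|].
  exists d. split; auto. intros u Hu. specialize (Hd' u Hu).
  pose proof (Rabs_triang (h w - h u) (h u - h z0)) as T.
  replace (h w - h u + (h u - h z0)) with (h w - h z0) in T by ring.
  rewrite Rabs_minus_sym in Hd'. lra.
- intros w Kw. destruct (sin_zero_gap _ (Hs w Kw)) as [E'|E'].
  + left. rewrite E', Rabs_R0. lra.
  + right; lra.
- exists z0. rewrite Rminus_diag, Rabs_R0. split; auto; lra.
- exists z. split; auto; lra.
- intros w _ H1 H2. lra.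
Qed.

(** * Distance functions and Urysohn's lemma *)

Definition is_dist (M : Cplx -> Prop) (z : Cplx) (r : R) : Prop :=
  (forall m, M m -> r <= cdist z m) /\
  (forall e, 0 < e -> exists m, M m /\ cdist z m < r + e).

Lemma is_dist_exists M z : (exists m, M m) -> exists r, is_dist M z r.
Proof.
intros [m0 Hm0].
set (E := fun x => exists m, M m /\ x = - cdist z m).
assert (bE : bound E).
{ exists 0. intros x [m [_ ->]]. pose proof (cdist_nonneg z m). lra. }
destruct (completeness E bE (ex_intro _ _ (ex_intro _ m0 (conj Hm0 eq_refl))))
  as [l [Hub Hlub]].
exists (- l). split.
- intros m Hm. assert (Hl : E (- cdist z m)) by (exists m; auto).
  apply Hub in Hl. lra.
- intros e He. apply NNPP. intro Hn.
  assert (l <= l - e); [|lra].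
  apply Hlub. intros x [m [Hm ->]].
  destruct (Rle_lt_dec (- cdist z m) (l - e)); auto.
  exfalso; apply Hn. exists m. split; auto. lra.
Qed.

Lemma is_dist_nonneg M z r : is_dist M z r -> 0 <= r.
Proof.
intros [_ H]. apply Ropp_le_cancel. rewrite Ropp_0. apply Rle_plus_epsilon.
intros e He. destruct (H e He) as [m [_ Hm]]. pose proof (cdist_nonneg z m). lra.
Qed.

Lemma is_dist_lip M z w r s : is_dist M z r -> is_dist M w s -> r <= s + cdist z w.
Proof.
intros [H1 _] [_ H2]. apply Rle_plus_epsilon. intros e He.
destruct (H2 e He) as [m [Mm Hm]].
pose proof (H1 m Mm). pose proof (cdist_tri z w m). rewrite (cdist_sym z w) in *. lra.
Qed.

Lemma is_dist_zero M z : is_closed M -> is_dist M z 0 -> M z.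
Proof.
intros HM [_ H]. apply NNPP. intro Hn. destruct (HM z Hn) as [r [Hr Hr']].
destruct (H r Hr) as [m [Mm Hm]]. apply (Hr' m); auto. lra.
Qed.

Lemma is_dist_in M z r : M z -> is_dist M z r -> r = 0.
Proof.
intros Mz Hd. pose proof (is_dist_nonneg _ _ _ Hd). destruct Hd as [Hh _].
pose proof (Hh z Mz) as Hz. rewrite cdist_refl in Hz. lra.
Qed.

Lemma lipschitz_ratio_cts (f g : Cplx -> R) :
  (forall z, 0 <= f z) -> (forall z, 0 <= g z) -> (forall z, 0 < f z + g z) ->
  (forall z w, f z <= f w + cdist z w) -> (forall z w, g z <= g w + cdist z w) ->
  cts (fun z => f z / (f z + g z)).
Proof.
intros Pf Pg Dp Lf Lg z e He.
set (D := f z + g z). assert (HD : 0 < D) by apply Dp.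
exists (Rmin (D / 4) (e * D / 7)). split; [apply Rmin_pos; nra|].
intros w Hw. pose proof (Rmin_l (D / 4) (e * D / 7)). pose proof (Rmin_r (D / 4) (e * D / 7)).
pose proof (Lf z w) as L1. pose proof (Lf w z) as L2.
pose proof (Lg z w) as L3. pose proof (Lg w z) as L4.
rewrite (cdist_sym w z) in L2, L4.
set (dl := cdist z w) in *. assert (Hdl0 : 0 <= dl) by apply cdist_nonneg.
set (Dw := f w + g w). assert (HDw : D / 2 <= Dw) by (unfold Dw, D in *; lra).
replace (f w / Dw - f z / D) with (((f w - f z) * D - f z * (Dw - D)) / (Dw * D))
  by (field; split; lra).
unfold Rdiv. rewrite Rabs_mult, (Rabs_right (/ (Dw * D))) by (left; apply Rinv_0_lt_compat; nra).
assert (Num : Rabs ((f w - f z) * D - f z * (Dw - D)) <= 3 * dl * D).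
{ pose proof (Pf z). pose proof (Pg z). apply Rabs_le. unfold Dw, D in *. split; nra. }
assert (Inv : / (Dw * D) <= 2 / (D * D)).
{ replace (2 / (D * D)) with (/ ((D / 2) * D)) by (field; lra).
  apply Rinv_le_contravar; nra. }
apply Rle_lt_trans with (3 * dl * D * (2 / (D * D))).
{ apply Rmult_le_compat; auto using Rabs_pos. left; apply Rinv_0_lt_compat; nra. }
replace (3 * dl * D * (2 / (D * D))) with (6 * dl / D) by (field; lra).
apply Rmult_lt_reg_r with D; auto. unfold Rdiv. rewrite Rmult_assoc, Rinv_l by lra.
nra.
Qed.

Lemma urysohn M1 M2 : is_closed M1 -> is_closed M2 ->
  (forall z, M1 z -> M2 z -> False) -> (exists z, M1 z) -> (exists z, M2 z) ->
  exists g : Cplx -> R,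
    (forall z, M1 z -> g z = 0) /\ (forall z, M2 z -> g z = 1) /\ cts g.
Proof.
intros C1 C2 Hd N1 N2.
assert (Hdist : forall M, (exists m, M m) ->
  exists d : Cplx -> R, forall z, is_dist M z (d z)).
{ intros M NM. apply choice. intros z. apply is_dist_exists, NM. }
destruct (Hdist M1 N1) as [d1 H1]. destruct (Hdist M2 N2) as [d2 H2].
assert (P1 : forall z, 0 <= d1 z) by (intros; eapply is_dist_nonneg; eauto).
assert (P2 : forall z, 0 <= d2 z) by (intros; eapply is_dist_nonneg; eauto).
assert (Dp : forall z, 0 < d1 z + d2 z).
{ intros z. destruct (Req_dec (d1 z + d2 z) 0) as [E|E]; [|specialize (P1 z); specialize (P2 z); lra].
  exfalso. specialize (P1 z); specialize (P2 z). apply (Hd z); apply is_dist_zero; auto.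
  - replace 0 with (d1 z) by lra. auto.
  - replace 0 with (d2 z) by lra. auto. }
exists (fun z => d1 z / (d1 z + d2 z)). split; [|split].
- intros z Mz. rewrite (is_dist_in _ _ _ Mz (H1 z)). unfold Rdiv; ring.
- intros z Mz. pose proof (Dp z). rewrite (is_dist_in _ _ _ Mz (H2 z)) in *. field. lra.
- apply lipschitz_ratio_cts; auto; intros z w; eapply is_dist_lip; eauto.
Qed.

(** * Angles on the unit circle *)

Definition on_circle (u : Cplx) : Prop := fst u ^ 2 + snd u ^ 2 = 1.

(* The complex product u * conj v. *)
Definition cmul_conj (u v : Cplx) : Cplx :=
  (fst u * fst v + snd u * snd v, snd u * fst v - fst u * snd v).

(* The argument in (-pi, pi) of a unit vector w different from -1, by the
   half-angle formula. *)
Definition principal_angle (w : Cplx) : R := 2 * atan (snd w / (1 + fst w)).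

(* The angle from v to u, meaningful when u and v are not antipodal. *)
Definition rel_angle (u v : Cplx) : R := principal_angle (cmul_conj u v).

Lemma principal_angle_spec w : on_circle w -> -1 < fst w ->
  cos (principal_angle w) = fst w /\ sin (principal_angle w) = snd w.
Proof.
unfold on_circle, principal_angle. destruct w as [a b]; cbn [fst snd]. intros Hu Ha.
set (x := b / (1 + a)).
assert (Hx2 : x ^ 2 = (1 - a) / (1 + a)).
{ unfold x, Rdiv. rewrite Rpow_mult_distr.
  replace (b ^ 2) with ((1 - a) * (1 + a)) by lra. field. lra. }
assert (H1x : 1 + x ^ 2 = 2 / (1 + a)) by (rewrite Hx2; field; lra).
assert (Hs : sqrt (1 + x²) ^ 2 = 1 + x ^ 2).
{ rewrite pow2_sqrt; unfold Rsqr; [ring|]. pose proof (pow2_ge_0 x). nra. }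
assert (Hspos : 0 < sqrt (1 + x²)) by (apply sqrt_lt_R0; unfold Rsqr; nra).
rewrite cos_2a, sin_2a, cos_atan, sin_atan.
set (s := sqrt (1 + x²)) in *. split.
- replace (1 / s * (1 / s) - x / s * (x / s)) with ((1 - x ^ 2) / s ^ 2) by (field; lra).
  rewrite Hs, H1x, Hx2. field. lra.
- replace (2 * (x / s) * (1 / s)) with (2 * x / s ^ 2) by (field; lra).
  rewrite Hs, H1x. unfold x. field. lra.
Qed.

Lemma on_circle_cmul_conj u v : on_circle u -> on_circle v -> on_circle (cmul_conj u v).
Proof.
unfold on_circle, cmul_conj; cbn [fst snd]. intros Hu Hv.
replace ((fst u * fst v + snd u * snd v) ^ 2 + (snd u * fst v - fst u * snd v) ^ 2)
  with ((fst u ^ 2 + snd u ^ 2) * (fst v ^ 2 + snd v ^ 2)) by ring.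
rewrite Hu, Hv; ring.
Qed.

Lemma cmul_conj_fst u v : on_circle u -> on_circle v ->
  fst (cmul_conj u v) = 1 - sqdist u v / 2.
Proof. unfold on_circle, cmul_conj, sqdist; cbn [fst snd]. intros Hu Hv. nra. Qed.

Lemma rel_angle_spec u v al : on_circle u -> on_circle v -> sqdist u v < 4 ->
  fst v = cos al -> snd v = sin al ->
  fst u = cos (al + rel_angle u v) /\ snd u = sin (al + rel_angle u v).
Proof.
intros Hu Hv Hd Hc Hs.
assert (Hw : -1 < fst (cmul_conj u v)) by (rewrite cmul_conj_fst; auto; lra).
destruct (principal_angle_spec _ (on_circle_cmul_conj u v Hu Hv) Hw) as [Ca Sa].
unfold rel_angle. rewrite cos_plus, sin_plus, Ca, Sa. unfold cmul_conj; cbn [fst snd].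
rewrite <- Hc, <- Hs. unfold on_circle in Hv. split.
- transitivity (fst u * (fst v ^ 2 + snd v ^ 2)); [rewrite Hv|]; ring.
- transitivity (snd u * (fst v ^ 2 + snd v ^ 2)); [rewrite Hv|]; ring.
Qed.

Lemma rel_angle_self u : rel_angle u u = 0.
Proof.
unfold rel_angle, principal_angle, cmul_conj; cbn [fst snd].
replace (snd u * fst u - fst u * snd u) with 0 by ring.
unfold Rdiv; rewrite Rmult_0_l, atan_0; ring.
Qed.

Lemma angle_exists u : on_circle u -> exists t, fst u = cos t /\ snd u = sin t.
Proof.
intros Hu. destruct (Rlt_le_dec (-1) (fst u)) as [H|H].
- exists (principal_angle u). destruct (principal_angle_spec u Hu H); auto.
- exists PI. rewrite cos_PI, sin_PI. unfold on_circle in Hu.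
  pose proof (pow2_ge_0 (snd u)). assert (fst u = -1) by nra. split; nra.
Qed.

Lemma angle_eq a b : cos a = cos b -> sin a = sin b -> Rabs (a - b) < 2 * PI -> a = b.
Proof.
intros Hc Hs Hab.
assert (S0 : sin (a - b) = 0) by (rewrite sin_minus, Hc, Hs; ring).
assert (C1 : cos (a - b) = 1).
{ rewrite cos_minus, Hc, Hs, <- (sin2_cos2 b). unfold Rsqr; ring. }
destruct (sin_eq_0_0 _ S0) as [k Hk]. pose proof PI_RGT_0.
assert (Hk2 : -2 < IZR k < 2).
{ rewrite Hk, Rabs_mult, (Rabs_right PI) in Hab by lra.
  assert (Habs : Rabs (IZR k) < 2) by nra. apply Rabs_def2 in Habs. lra. }
destruct Hk2 as [Hk1 Hk2]. apply lt_IZR in Hk1. apply lt_IZR in Hk2.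
assert (Hk3 : (k = 0 \/ k = 1 \/ k = -1)%Z) by lia.
destruct Hk3 as [->|[->| ->]]; rewrite Hk in C1.
- lra.
- rewrite Rmult_1_l, cos_PI in C1. lra.
- replace (IZR (-1) * PI) with (- PI) in C1 by (simpl; ring).
  rewrite cos_neg, cos_PI in C1. lra.
Qed.

Lemma rel_angle_bound u v : on_circle u -> on_circle v -> cdist u v < 1 / 2 ->
  Rabs (rel_angle u v) < PI / 2.
Proof.
intros Hu Hv Hd. apply cdist_lt in Hd; [|lra].
pose proof (cmul_conj_fst u v Hu Hv) as Hf. pose proof (on_circle_cmul_conj u v Hu Hv) as Hw.
unfold rel_angle, principal_angle. set (w := cmul_conj u v) in *. unfold on_circle in Hw.
pose proof (sqdist_nonneg u v).
set (x := snd w / (1 + fst w)).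
assert (Hx : -1 < x < 1).
{ unfold x. assert (0 < 1 + fst w) by lra.
  split; apply Rmult_lt_reg_r with (1 + fst w); auto;
    unfold Rdiv; rewrite Rmult_assoc, Rinv_l; nra. }
assert (-(PI / 4) < atan x < PI / 4).
{ rewrite <- atan_1, <- atan_opp. split; apply atan_increasing; lra. }
apply Rabs_def1; lra.
Qed.

Lemma rel_angle_add a b c : on_circle a -> on_circle b -> on_circle c ->
  cdist a b < 1 / 2 -> cdist b c < 1 / 2 -> cdist a c < 1 / 2 ->
  rel_angle a c = rel_angle a b + rel_angle b c.
Proof.
intros Ha Hb Hc Hab Hbc Hac.
destruct (angle_exists c Hc) as [g [Cg Sg]].
assert (L : forall u v, cdist u v < 1 / 2 -> sqdist u v < 4).
{ intros u v H. apply cdist_lt in H; lra. }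
destruct (rel_angle_spec b c g Hb Hc (L _ _ Hbc) Cg Sg) as [Cb Sb].
destruct (rel_angle_spec a b (g + rel_angle b c) Ha Hb (L _ _ Hab) Cb Sb) as [Ca Sa].
destruct (rel_angle_spec a c g Ha Hc (L _ _ Hac) Cg Sg) as [Ca' Sa'].
pose proof (rel_angle_bound _ _ Ha Hb Hab) as B1.
pose proof (rel_angle_bound _ _ Hb Hc Hbc) as B2.
pose proof (rel_angle_bound _ _ Ha Hc Hac) as B3.
assert (g + rel_angle a c = g + rel_angle b c + rel_angle a b); [|lra].
apply angle_eq; try congruence.
apply Rabs_def2 in B1; apply Rabs_def2 in B2; apply Rabs_def2 in B3.
apply Rabs_def1; lra.
Qed.

Lemma rel_angle_small eps : 0 < eps -> exists eta, 0 < eta /\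
  forall u v, on_circle u -> on_circle v -> cdist u v < eta -> Rabs (rel_angle u v) < eps.
Proof.
intros He.
pose proof (derivable_continuous_pt _ _ (derivable_pt_atan 0)) as Hc.
destruct (Hc (eps / 2)) as [al [Hal Hal']]; [lra|].
exists (Rmin al (1 / 2)). split; [apply Rmin_pos; lra|].
intros u v Hu Hv Hd.
pose proof (cmul_conj_fst u v Hu Hv) as Hf. pose proof (on_circle_cmul_conj u v Hu Hv) as Hw.
assert (Hd1 : cdist u v < al) by (pose proof (Rmin_l al (1 / 2)); lra).
assert (Hd2 : cdist u v < 1 / 2) by (pose proof (Rmin_r al (1 / 2)); lra).
apply cdist_lt in Hd1; [|lra]. apply cdist_lt in Hd2; [|lra].
pose proof (sqdist_nonneg u v).
unfold rel_angle, principal_angle. set (w := cmul_conj u v) in *. unfold on_circle in Hw.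
set (x := snd w / (1 + fst w)).
assert (Hx : x ^ 2 < al ^ 2).
{ unfold x. assert (0 < 1 + fst w) by lra.
  assert (snd w ^ 2 <= sqdist u v) by nra.
  unfold Rdiv. rewrite Rpow_mult_distr.
  assert (0 < / (1 + fst w) <= 1).
  { split; [apply Rinv_0_lt_compat; lra|].
    rewrite <- Rinv_1. apply Rinv_le_contravar; lra. }
  assert (0 <= (/ (1 + fst w)) ^ 2 <= 1) by (split; nra).
  pose proof (pow2_ge_0 (snd w)). nra. }
destruct (Req_dec x 0) as [E|E].
- rewrite E, atan_0, Rmult_0_r, Rabs_R0. lra.
- assert (Hlt : Rabs x < al).
  { destruct (Rlt_le_dec (Rabs x) al); auto. rewrite <- (pow2_abs x) in Hx.
    pose proof (Rabs_pos x). nra. }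
  assert (Hat : Rabs (atan x - atan 0) < eps / 2).
  { apply (Hal' x). split; [split; [exact I | auto]|].
    simpl. unfold R_dist. rewrite Rminus_0_r. auto. }
  rewrite atan_0, Rminus_0_r in Hat. rewrite Rabs_mult, Rabs_right by lra. lra.
Qed.

Lemma circle_map_cts a e : 0 < e -> exists d, 0 < d /\ forall b, Rabs (b - a) < d ->
  cdist (cos a, sin a) (cos b, sin b) < e.
Proof.
intros He.
destruct (continuity_cos a (e / 2)) as [d1 [Hd1 H1]]; [lra|].
destruct (continuity_sin a (e / 2)) as [d2 [Hd2 H2]]; [lra|].
exists (Rmin d1 d2). split; [apply Rmin_pos; auto|]. intros b Hb.
pose proof (Rmin_l d1 d2). pose proof (Rmin_r d1 d2).
assert (Ec : Rabs (cos b - cos a) < e / 2).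
{ destruct (Req_dec b a) as [->|Hne]; [rewrite Rminus_diag, Rabs_R0; lra|].
  apply (H1 b). split; [split; [exact I | auto]|]. simpl; unfold R_dist; lra. }
assert (Es : Rabs (sin b - sin a) < e / 2).
{ destruct (Req_dec b a) as [->|Hne]; [rewrite Rminus_diag, Rabs_R0; lra|].
  apply (H2 b). split; [split; [exact I | auto]|]. simpl; unfold R_dist; lra. }
apply cdist_lt; auto. unfold sqdist; cbn [fst snd].
rewrite <- (pow2_abs (cos a - cos b)), <- (pow2_abs (sin a - sin b)).
rewrite Rabs_minus_sym, (Rabs_minus_sym (sin a)).
pose proof (Rabs_pos (cos b - cos a)). pose proof (Rabs_pos (sin b - sin a)). nra.
Qed.

(** * Continuous maps to the circle have continuous logarithms *)

Definition origin : Cplx := (0, 0).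

Definition cts_map (phi : Cplx -> Cplx) : Prop :=
  forall z e, 0 < e -> exists d, 0 < d /\
    forall w, cdist z w < d -> cdist (phi z) (phi w) < e.

Lemma cdist_radial z z' t :
  cdist (segpt origin z t) (segpt origin z' t) = Rabs t * cdist z z'.
Proof.
unfold cdist, segpt, origin; cbn [fst snd].
replace ((0 + t * (fst z - 0) - (0 + t * (fst z' - 0))) ^ 2 +
   (0 + t * (snd z - 0) - (0 + t * (snd z' - 0))) ^ 2) with
  (Rabs t ^ 2 * ((fst z - fst z') ^ 2 + (snd z - snd z') ^ 2))
  by (rewrite pow2_abs; ring).
rewrite sqrt_mult, sqrt_pow2; auto using Rabs_pos, pow2_ge_0.
pose proof (pow2_ge_0 (fst z - fst z')). pose proof (pow2_ge_0 (snd z - snd z')). lra.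
Qed.

Fixpoint sum_upto (f : nat -> R) (n : nat) : R :=
  match n with O => 0 | S m => sum_upto f m + f m end.

Lemma sum_upto_ext f g n :
  (forall k, (k < n)%nat -> f k = g k) -> sum_upto f n = sum_upto g n.
Proof.
induction n as [|n IH]; simpl; intros H; auto.
rewrite IH, H; auto; intros; apply H; lia.
Qed.

Lemma sum_upto_add f a b :
  sum_upto f (a + b) = sum_upto f a + sum_upto (fun j => f (a + j)%nat) b.
Proof.
induction b as [|b IH]; simpl; [rewrite Nat.add_0_r; ring|].
rewrite Nat.add_succ_r; simpl; rewrite IH; ring.
Qed.

Lemma sum_upto_blocks f N M :
  sum_upto f (N * M) = sum_upto (fun k => sum_upto (fun j => f (k * M + j)%nat) M) N.
Proof.
induction N as [|N IH]; simpl; auto.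
replace (M + N * M)%nat with (N * M + M)%nat by lia. rewrite sum_upto_add, IH. auto.
Qed.

Lemma grid_param_range k N : (0 < N)%nat -> (k <= N)%nat -> 0 <= INR k / INR N <= 1.
Proof.
intros HN Hk. assert (0 < INR N) by (apply lt_0_INR; auto).
pose proof (pos_INR k). apply le_INR in Hk. split.
- unfold Rdiv; apply Rmult_le_pos; [lra | left; apply Rinv_0_lt_compat; lra].
- apply Rmult_le_reg_r with (INR N); auto. unfold Rdiv. rewrite Rmult_assoc, Rinv_l; lra.
Qed.

Lemma grid_param_step k N : (0 < N)%nat ->
  Rabs (INR (S k) / INR N - INR k / INR N) <= / INR N.
Proof.
intros HN. assert (0 < INR N) by (apply lt_0_INR; auto). rewrite S_INR.
replace ((INR k + 1) / INR N - INR k / INR N) with (/ INR N) by (field; lra).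
rewrite Rabs_right; [lra | left; apply Rinv_0_lt_compat; auto].
Qed.

Lemma grid_block_close N M k i i' : (0 < N)%nat -> (0 < M)%nat -> (k < N)%nat ->
  (k * M <= i <= k * M + M)%nat -> (k * M <= i' <= k * M + M)%nat ->
  0 <= INR i / INR (N * M) <= 1 /\
  Rabs (INR i / INR (N * M) - INR i' / INR (N * M)) <= / INR N.
Proof.
intros HN HM Hk Hi Hi'. split; [apply grid_param_range; nia|].
assert (0 < INR N) by (apply lt_0_INR; auto). assert (0 < INR M) by (apply lt_0_INR; auto).
assert (H1 : INR i <= INR i' + INR M) by (rewrite <- plus_INR; apply le_INR; lia).
assert (H2 : INR i' <= INR i + INR M) by (rewrite <- plus_INR; apply le_INR; lia).
rewrite mult_INR.
replace (INR i / (INR N * INR M) - INR i' / (INR N * INR M))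
  with ((INR i - INR i') / INR M * / INR N) by (field; lra).
rewrite Rabs_mult, (Rabs_right (/ INR N)) by (left; apply Rinv_0_lt_compat; auto).
rewrite <- (Rmult_1_l (/ INR N)) at 2.
apply Rmult_le_compat_r; [left; apply Rinv_0_lt_compat; auto|].
unfold Rdiv. rewrite Rabs_mult, (Rabs_right (/ INR M)) by (left; apply Rinv_0_lt_compat; auto).
apply Rmult_le_reg_r with (INR M); auto.
rewrite Rmult_assoc, Rinv_l, Rmult_1_r, Rmult_1_l by lra.
apply Rabs_le; lra.
Qed.

Section Lifting.

Variable phi : Cplx -> Cplx.
Hypothesis phi_circle : forall z, on_circle (phi z).
Hypothesis phi_cts : cts_map phi.

Lemma cts_along_segment z0 e : 0 < e -> exists rho, 0 < rho /\
  forall t, 0 <= t <= 1 -> forall w, cdist (segpt origin z0 t) w < rho ->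
  cdist (phi (segpt origin z0 t)) (phi w) < e.
Proof.
intros He.
set (d := cdist origin z0). assert (Hd0 : 0 <= d) by apply cdist_nonneg.
set (Q := fun s => exists rho, 0 < rho /\ forall t, 0 <= t <= s -> forall w,
   cdist (segpt origin z0 t) w < rho -> cdist (phi (segpt origin z0 t)) (phi w) < e).
assert (HQ : Q 1); [|destruct HQ as [rho [Hr Hr']]; exists rho; split; auto].
apply continuity_induction; [|lra]. intros m Hm Hb.
destruct (phi_cts (segpt origin z0 m) (e / 2)) as [d1 [Hd1 Hd1']]; [lra|].
set (eta := d1 / (2 * (d + 1))).
assert (Heta : 0 < eta) by (apply Rdiv_lt_0_compat; lra).
assert (Hclose : forall t, Rabs (t - m) < eta -> forall w,
   cdist (segpt origin z0 t) w < d1 / 2 -> cdist (phi (segpt origin z0 t)) (phi w) < e).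
{ intros t Ht w Hw.
  assert (Hpm : cdist (segpt origin z0 m) (segpt origin z0 t) < d1 / 2).
  { rewrite cdist_segpt. fold d. rewrite Rabs_minus_sym.
    assert (Rabs (t - m) * (2 * (d + 1)) < d1).
    { apply Rmult_lt_compat_r with (r := 2 * (d + 1)) in Ht; [|lra].
      unfold eta, Rdiv in Ht. rewrite Rmult_assoc, Rinv_l in Ht by lra. lra. }
    pose proof (Rabs_pos (t - m)). nra. }
  pose proof (Hd1' (segpt origin z0 t) ltac:(lra)) as E1.
  pose proof (cdist_tri (segpt origin z0 m) (segpt origin z0 t) w).
  pose proof (Hd1' w ltac:(lra)) as E2.
  pose proof (cdist_tri (phi (segpt origin z0 t)) (phi (segpt origin z0 m)) (phi w)).
  rewrite cdist_sym in E1. lra. }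
exists eta. split; auto. intros s Hs Hsm.
destruct (Rle_lt_dec 0 (m - eta / 2)) as [Hp|Hn].
- destruct (Hb (m - eta / 2)) as [r1 [Hr1 Hr1']]; [lra|].
  exists (Rmin r1 (d1 / 2)). split; [apply Rmin_pos; lra|].
  intros t Ht w Hw. pose proof (Rmin_l r1 (d1 / 2)). pose proof (Rmin_r r1 (d1 / 2)).
  destruct (Rle_lt_dec t (m - eta / 2)).
  + apply Hr1'; lra.
  + apply Hclose; [apply Rabs_def1|]; lra.
- exists (d1 / 2). split; [lra|]. intros t Ht w Hw. apply Hclose; auto. apply Rabs_def1; lra.
Qed.

Definition fine_mesh (z : Cplx) (N : nat) (e : R) : Prop := (0 < N)%nat /\
  forall a b, 0 <= a <= 1 -> 0 <= b <= 1 -> Rabs (a - b) <= / INR N ->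
  cdist (phi (segpt origin z a)) (phi (segpt origin z b)) < e.

Lemma fine_mesh_weaken z N e e' : e <= e' -> fine_mesh z N e -> fine_mesh z N e'.
Proof. intros He [HN Hg]. split; auto. intros a b Ha Hb Hab. specialize (Hg a b Ha Hb Hab). lra. Qed.

Lemma fine_mesh_near z0 : exists rho N, 0 < rho /\ fine_mesh z0 N (1 / 8) /\
  forall z, cdist z0 z < rho -> fine_mesh z N (3 / 8) /\
    forall t, 0 <= t <= 1 -> cdist (phi (segpt origin z0 t)) (phi (segpt origin z t)) < 1 / 8.
Proof.
destruct (cts_along_segment z0 (1 / 8)) as [rho [Hr Hr']]; [lra|].
set (d := cdist origin z0). assert (Hd0 : 0 <= d) by apply cdist_nonneg.
destruct (INR_unbounded (d / rho)) as [N0 HN0].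
set (N := S N0).
assert (HNp : 0 < INR N) by (unfold N; apply lt_0_INR; lia).
assert (HdN : d * / INR N < rho).
{ assert (HN : INR N > d / rho) by (unfold N; rewrite S_INR; lra).
  apply Rmult_lt_reg_r with (INR N); auto. rewrite Rmult_assoc, Rinv_l by lra.
  apply Rmult_lt_reg_r with (/ rho); [apply Rinv_0_lt_compat; lra|].
  rewrite Rmult_1_r. replace (rho * INR N * / rho) with (INR N) by (field; lra). lra. }
assert (G0 : fine_mesh z0 N (1 / 8)).
{ split; [unfold N; lia|]. intros a b Ha Hb Hab. apply Hr'; auto.
  rewrite cdist_segpt. fold d. pose proof (Rabs_pos (a - b)).
  assert (Rabs (a - b) * d <= / INR N * d) by (apply Rmult_le_compat_r; auto). nra. }
exists rho, N. split; auto. split; auto. intros z Hz.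
assert (Ht : forall t, 0 <= t <= 1 ->
  cdist (phi (segpt origin z0 t)) (phi (segpt origin z t)) < 1 / 8).
{ intros t Ht. apply Hr'; auto. rewrite cdist_radial, Rabs_right by lra.
  pose proof (cdist_nonneg z0 z). nra. }
split; auto. split; [apply (proj1 G0)|].
intros a b Ha Hb Hab.
pose proof (Ht a Ha) as Ea. pose proof (Ht b Hb). pose proof (proj2 G0 a b Ha Hb Hab).
rewrite cdist_sym in Ea.
pose proof (cdist_tri3 (phi (segpt origin z a)) (phi (segpt origin z0 a))
  (phi (segpt origin z0 b)) (phi (segpt origin z b))). lra.
Qed.

Definition grid_pt (z : Cplx) (N k : nat) : Cplx := segpt origin z (INR k / INR N).

Definition angle_step (z : Cplx) (N k : nat) : R :=
  rel_angle (phi (grid_pt z N (S k))) (phi (grid_pt z N k)).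

Definition angle_sum (z : Cplx) (N : nat) : R := sum_upto (angle_step z N) N.

Lemma grid_pt0 z N : grid_pt z N 0 = origin.
Proof. unfold grid_pt. simpl (INR 0). unfold Rdiv; rewrite Rmult_0_l. apply segpt0. Qed.

Lemma grid_ptN z N : (0 < N)%nat -> grid_pt z N N = z.
Proof.
intros HN. unfold grid_pt. assert (0 < INR N) by (apply lt_0_INR; auto).
replace (INR N / INR N) with 1 by (field; lra). apply segpt1.
Qed.

Lemma angle_sum_lifts z N th0 : fine_mesh z N (1 / 2) ->
  fst (phi origin) = cos th0 -> snd (phi origin) = sin th0 ->
  forall k, (k <= N)%nat ->
  fst (phi (grid_pt z N k)) = cos (th0 + sum_upto (angle_step z N) k) /\
  snd (phi (grid_pt z N k)) = sin (th0 + sum_upto (angle_step z N) k).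
Proof.
intros [HN Hg] Hc Hs. induction k as [|k IH]; intros Hk.
- simpl. rewrite grid_pt0, Rplus_0_r; auto.
- destruct IH as [Ck Sk]; [lia|]. simpl.
  replace (th0 + (sum_upto (angle_step z N) k + angle_step z N k)) with
    ((th0 + sum_upto (angle_step z N) k)
       + rel_angle (phi (grid_pt z N (S k))) (phi (grid_pt z N k)))
    by (unfold angle_step; ring).
  apply rel_angle_spec; auto.
  assert (Hclose : cdist (phi (grid_pt z N (S k))) (phi (grid_pt z N k)) < 1 / 2).
  { apply Hg; auto using grid_param_range, grid_param_step with arith. }
  apply cdist_lt in Hclose; lra.
Qed.

Lemma angle_sum_refine z N M : fine_mesh z N (1 / 2) -> (0 < M)%nat ->
  angle_sum z N = angle_sum z (N * M).
Proof.
intros [HN Hg] HM. unfold angle_sum. rewrite sum_upto_blocks.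
apply sum_upto_ext. intros k Hk.
set (q := fun i => phi (grid_pt z (N * M) i)).
assert (Hd : forall i i', (k * M <= i <= k * M + M)%nat ->
   (k * M <= i' <= k * M + M)%nat -> cdist (q i) (q i') < 1 / 2).
{ intros i i' Hi Hi'. unfold q, grid_pt.
  destruct (grid_block_close N M k i i' HN HM Hk Hi Hi') as [R1 R2].
  destruct (grid_block_close N M k i' i HN HM Hk Hi' Hi) as [R3 _].
  apply Hg; auto. }
assert (Inner : forall j, (j <= M)%nat ->
   sum_upto (fun j => angle_step z (N * M) (k * M + j)) j
   = rel_angle (q (k * M + j)%nat) (q (k * M)%nat)).
{ induction j as [|j IH]; intros Hj.
  - simpl. rewrite Nat.add_0_r, rel_angle_self; auto.
  - simpl. rewrite IH by lia. unfold angle_step.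
    fold (q (S (k * M + j))). fold (q (k * M + j)%nat). rewrite Nat.add_succ_r.
    rewrite (rel_angle_add (q (S (k * M + j))) (q (k * M + j)%nat) (q (k * M)%nat));
      try (unfold q; auto); [ring| apply Hd; lia ..]. }
rewrite Inner by lia. unfold angle_step, q.
assert (0 < INR N) by (apply lt_0_INR; auto). assert (0 < INR M) by (apply lt_0_INR; auto).
f_equal; f_equal; unfold grid_pt; f_equal.
- rewrite plus_INR, !mult_INR, S_INR. field. lra.
- rewrite !mult_INR. field. lra.
Qed.

Lemma angle_sum_indep z N M : fine_mesh z N (1 / 2) -> fine_mesh z M (1 / 2) ->
  angle_sum z N = angle_sum z M.
Proof.
intros GN GM. rewrite (angle_sum_refine z N M GN (proj1 GM)).
rewrite (angle_sum_refine z M N GM (proj1 GN)), Nat.mul_comm. auto.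
Qed.

Lemma angle_sum_compare z0 z N : fine_mesh z0 N (1 / 8) -> fine_mesh z N (3 / 8) ->
  (forall t, 0 <= t <= 1 ->
     cdist (phi (segpt origin z0 t)) (phi (segpt origin z t)) < 1 / 8) ->
  forall k, (k <= N)%nat ->
  sum_upto (angle_step z N) k - sum_upto (angle_step z0 N) k
  = rel_angle (phi (grid_pt z N k)) (phi (grid_pt z0 N k)).
Proof.
intros [HN G0] [_ G] Ht. induction k as [|k IH]; intros Hk.
- simpl. rewrite !grid_pt0, rel_angle_self. ring.
- simpl.
  replace (sum_upto (angle_step z N) k + angle_step z N k
           - (sum_upto (angle_step z0 N) k + angle_step z0 N k))
    with ((sum_upto (angle_step z N) k - sum_upto (angle_step z0 N) k)
          + angle_step z N k - angle_step z0 N k) by ring.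
  rewrite IH by lia. unfold angle_step.
  set (a0 := phi (grid_pt z N k)). set (a1 := phi (grid_pt z N (S k))).
  set (b0 := phi (grid_pt z0 N k)). set (b1 := phi (grid_pt z0 N (S k))).
  assert (Rk : 0 <= INR k / INR N <= 1) by (apply grid_param_range; auto; lia).
  assert (RSk : 0 <= INR (S k) / INR N <= 1) by (apply grid_param_range; auto; lia).
  assert (St : Rabs (INR (S k) / INR N - INR k / INR N) <= / INR N)
    by (apply grid_param_step; auto).
  assert (Daa : cdist a1 a0 < 3 / 8) by (apply G; auto).
  assert (Dbb : cdist b1 b0 < 1 / 8) by (apply G0; auto).
  assert (Dab0 : cdist a0 b0 < 1 / 8) by (rewrite cdist_sym; apply Ht; auto).
  assert (Dab1 : cdist a1 b1 < 1 / 8) by (rewrite cdist_sym; apply Ht; auto).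
  assert (Dab : cdist a1 b0 < 1 / 4) by (pose proof (cdist_tri a1 b1 b0); lra).
  assert (E1 : rel_angle a1 b0 = rel_angle a1 a0 + rel_angle a0 b0)
    by (apply rel_angle_add; try apply phi_circle; lra).
  assert (E2 : rel_angle a1 b0 = rel_angle a1 b1 + rel_angle b1 b0)
    by (apply rel_angle_add; try apply phi_circle; lra).
  lra.
Qed.

Theorem circle_lift : exists th : Cplx -> R,
  (forall z, fst (phi z) = cos (th z) /\ snd (phi z) = sin (th z)) /\ cts th.
Proof.
destruct (angle_exists (phi origin) (phi_circle origin)) as [th0 [C0 S0]].
assert (Gex : forall z, exists N, fine_mesh z N (1 / 2)).
{ intros z. destruct (fine_mesh_near z) as [rho [N [Hr [_ H]]]].
  exists N. apply fine_mesh_weaken with (3 / 8); [lra|]. apply H. rewrite cdist_refl; auto. }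
destruct (choice _ Gex) as [mesh Hmesh].
exists (fun z => th0 + angle_sum z (mesh z)). split.
- intros z. pose proof (proj1 (Hmesh z)) as HN.
  destruct (angle_sum_lifts z (mesh z) th0 (Hmesh z) C0 S0 (mesh z) (le_n _)) as [A B].
  rewrite grid_ptN in A, B by auto. auto.
- intros z0 e He.
  destruct (fine_mesh_near z0) as [rho [N [Hr [G0 Hnear]]]].
  destruct (rel_angle_small e He) as [eta [Heta Heta']].
  destruct (phi_cts z0 eta Heta) as [d1 [Hd1 Hd1']].
  exists (Rmin rho d1). split; [apply Rmin_pos; auto|]. intros w Hw.
  pose proof (Rmin_l rho d1). pose proof (Rmin_r rho d1).
  destruct (Hnear w ltac:(lra)) as [Gw Ht].
  rewrite (angle_sum_indep w (mesh w) N (Hmesh w) (fine_mesh_weaken w N (3 / 8) (1 / 2) ltac:(lra) Gw)).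
  rewrite (angle_sum_indep z0 (mesh z0) N (Hmesh z0) (fine_mesh_weaken z0 N (1 / 8) (1 / 2) ltac:(lra) G0)).
  replace (th0 + angle_sum w N - (th0 + angle_sum z0 N))
    with (angle_sum w N - angle_sum z0 N) by ring.
  unfold angle_sum. rewrite (angle_sum_compare z0 w N G0 Gw Ht N (le_n _)).
  rewrite !grid_ptN by (apply (proj1 G0)).
  apply Heta'; auto. rewrite cdist_sym. apply Hd1'. lra.
Qed.

End Lifting.

(** * The frontier of a complementary component is connected *)

Lemma component_closure_in Y q z :
  is_open Y -> Y z -> closure (component Y q) z -> component Y q z.
Proof.
intros HY Yz Hz. destruct (HY z Yz) as [r [Hr Hr']].
destruct (Hz r Hr) as [w [Ww Hw]].
apply (component_absorb_ball Y q z r); auto; [exists w; split; auto | apply ball_center; auto].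
Qed.

Lemma separation_piece_closed A U V : is_closed A -> is_open V ->
  (forall z, A z -> U z \/ V z) -> (forall z, A z -> U z -> V z -> False) ->
  is_closed (fun z => A z /\ U z).
Proof.
intros HA HV Hc Hd z Hz. destruct (classic (A z)) as [Az|Az].
- assert (Vz : V z) by (destruct (Hc z Az); auto; exfalso; apply Hz; split; auto).
  destruct (HV z Vz) as [r [Hr Hr']]. exists r. split; auto.
  intros w Hw [Aw Uw]. exact (Hd w Aw Uw (Hr' w Hw)).
- destruct (HA z Az) as [r [Hr Hr']]. exists r. split; auto.
  intros w Hw [Aw _]. exact (Hr' w Hw Aw).
Qed.

Lemma frontier_in_closure P q z :
  frontier (component (fun z => ~ closure P z) q) z -> closure P z.
Proof.
intros [Hz Hn]. apply NNPP. intro Yz.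
exact (Hn (component_closure_in _ q z (closure_closed P) Yz Hz)).
Qed.

Lemma open_misses_closure_component P q z : is_open P -> P z ->
  ~ closure (component (fun z => ~ closure P z) q) z.
Proof.
intros Po Pz Hz. refine (open_closure_disj P _ Po _ z Pz Hz).
intros w Pw Ww. apply (component_sub _ _ _ Ww). apply closure_incl; auto.
Qed.

(* The circle-valued map exp (2 pi i g) on the closure of W, extended by 1
   outside. *)
Definition circle_paste (W : Cplx -> Prop) (g : Cplx -> R) (z : Cplx) : Cplx :=
  if excluded_middle_informative (closure W z)
  then (cos (2 * PI * g z), sin (2 * PI * g z)) else (1, 0).

Lemma circle_paste_on_circle W g z : on_circle (circle_paste W g z).
Proof.
unfold circle_paste, on_circle. destruct (excluded_middle_informative _); cbn [fst snd].
- pose proof (sin2_cos2 (2 * PI * g z)) as E. unfold Rsqr in E. lra.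
- ring.
Qed.

Lemma circle_paste_in W g z :
  closure W z -> circle_paste W g z = (cos (2 * PI * g z), sin (2 * PI * g z)).
Proof. intros Hz. unfold circle_paste. destruct (excluded_middle_informative _); tauto. Qed.

Lemma circle_paste_out W g z : ~ closure W z -> circle_paste W g z = (1, 0).
Proof. intros Hz. unfold circle_paste. destruct (excluded_middle_informative _); tauto. Qed.

Lemma circle_paste_cts W g : is_open W -> cts g ->
  (forall z, frontier W z -> cos (2 * PI * g z) = 1 /\ sin (2 * PI * g z) = 0) ->
  cts_map (circle_paste W g).
Proof.
intros Wo gc gA z e He.
destruct (classic (closure W z)) as [Hz|Hz].
- destruct (circle_map_cts (2 * PI * g z) e He) as [d1 [Hd1 Hd1']].
  pose proof PI_RGT_0.
  destruct (gc z (d1 / (2 * PI))) as [d2 [Hd2 Hd2']]; [apply Rdiv_lt_0_compat; lra|].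
  assert (Hclose : forall w, cdist z w < d2 ->
     cdist (cos (2 * PI * g z), sin (2 * PI * g z))
           (cos (2 * PI * g w), sin (2 * PI * g w)) < e).
  { intros w Hw. apply Hd1'. specialize (Hd2' w Hw).
    replace (2 * PI * g w - 2 * PI * g z) with (2 * PI * (g w - g z)) by ring.
    rewrite Rabs_mult, (Rabs_right (2 * PI)) by lra.
    apply Rmult_lt_compat_l with (r := 2 * PI) in Hd2'; [|lra].
    replace (2 * PI * (d1 / (2 * PI))) with d1 in Hd2' by (field; lra). lra. }
  rewrite (circle_paste_in W g z Hz).
  destruct (classic (W z)) as [Wz|Wz].
  + destruct (Wo z Wz) as [r [Hr Hr']]. exists (Rmin d2 r). split; [apply Rmin_pos; auto|].
    intros w Hw. pose proof (Rmin_l d2 r). pose proof (Rmin_r d2 r).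
    rewrite circle_paste_in by (apply closure_incl, Hr'; lra). apply Hclose; lra.
  + exists d2. split; auto. intros w Hw.
    destruct (classic (closure W w)) as [Hw'|Hw'].
    * rewrite circle_paste_in by auto. apply Hclose; auto.
    * rewrite circle_paste_out by auto.
      destruct (gA z (conj Hz Wz)) as [-> ->]. rewrite cdist_refl; auto.
- destruct (closure_closed W z Hz) as [r [Hr Hr']]. exists r. split; auto. intros w Hw.
  rewrite !circle_paste_out by auto. rewrite cdist_refl; auto.
Qed.

(* Let P be open and connected and
   W a component of the complement of the closure of P.  Every continuous
   g that is integer-valued on the frontier of W is constant there: lift
   the pasted map exp (2 pi i g) to a continuous angle th; then th is
   constant on P, hence on its closure, which contains the frontier, and
   th - 2 pi g is constant on W, hence on its frontier. *)
Lemma frontier_integer_const P p q g : is_open P -> connected P -> P p -> cts g ->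
  let W := component (fun z => ~ closure P z) q in
  (forall z, frontier W z -> cos (2 * PI * g z) = 1 /\ sin (2 * PI * g z) = 0) ->
  forall a b, frontier W a -> frontier W b -> g a = g b.
Proof.
intros Po HP Pp gc W gA.
assert (Wo : is_open W) by (apply component_open, closure_closed).
destruct (circle_lift (circle_paste W g) (circle_paste_on_circle W g)
  (circle_paste_cts W g Wo gc gA)) as [th [thl thc]].
assert (Hp : forall z, frontier W z -> th z = th p).
{ intros z Az. apply (cts_closure th P (th p) thc); [|apply (frontier_in_closure P q); auto].
  apply (cts_angle_const P th HP thc p Pp). intros w Pw.
  destruct (thl w) as [c1 s1]. destruct (thl p) as [c2 s2].
  rewrite circle_paste_out in c1, s1 by exact (open_misses_closure_component P q w Po Pw).
  rewrite circle_paste_out in c2, s2 by exact (open_misses_closure_component P q p Po Pp).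
  cbn [fst snd] in *. rewrite sin_minus, <- c1, <- s1, <- c2, <- s2. ring. }
set (k := fun z => th z + (- (2 * PI)) * g z).
assert (Hq : forall z, frontier W z -> k z = k q).
{ intros z Az. destruct (proj1 Az 1 ltac:(lra)) as [w0 [Ww0 _]].
  assert (Wq : W q) by exact (component_base _ _ _ Ww0).
  apply (cts_closure k W (k q)); [apply cts_lin; auto| |apply (proj1 Az)].
  apply (cts_angle_const W k (component_connected _ q) (cts_lin _ _ _ thc gc) q Wq).
  intros w Ww. destruct (thl w) as [c1 s1]. destruct (thl q) as [c2 s2].
  rewrite circle_paste_in in c1, s1 by (apply closure_incl; auto).
  rewrite circle_paste_in in c2, s2 by (apply closure_incl; auto).
  cbn [fst snd] in *.
  replace (k w - k q) with ((th w - 2 * PI * g w) - (th q - 2 * PI * g q)) by (unfold k; ring).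
  rewrite !sin_minus, !cos_minus, <- c1, <- s1, <- c2, <- s2. ring. }
intros a b Aa Ab. pose proof (Hp a Aa). pose proof (Hp b Ab).
pose proof (Hq a Aa). pose proof (Hq b Ab). unfold k in *. pose proof PI_RGT_0. nra.
Qed.

(* Hence that frontier is connected: a separation (M1, M2) of it would give
   a Urysohn function, 0 on M1 and 1 on M2, which is integer-valued but not
   constant on the frontier. *)
Lemma frontier_component_connected P p q : is_open P -> connected P -> P p ->
  connected (frontier (component (fun z => ~ closure P z) q)).
Proof.
intros Po HP Pp. set (W := component (fun z => ~ closure P z) q).
assert (Ac : is_closed (frontier W)) by (apply frontier_closed, component_open, closure_closed).
intros [U [V [HU [HV [Hc [[a1 [Aa1 Ua1]] [[a2 [Aa2 Va2]] Hd]]]]]]].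
destruct (urysohn (fun z => frontier W z /\ U z) (fun z => frontier W z /\ V z))
  as [g [g1 [g2 gc]]].
- apply (separation_piece_closed _ U V); auto.
- apply (separation_piece_closed _ V U); auto.
  + intros z Az. destruct (Hc z Az); auto.
  + intros z Az Vz Uz. exact (Hd z Az Uz Vz).
- intros z [Az Uz] [_ Vz]. exact (Hd z Az Uz Vz).
- exists a1; auto.
- exists a2; auto.
- assert (gZ : forall z, frontier W z -> cos (2 * PI * g z) = 1 /\ sin (2 * PI * g z) = 0).
  { intros z Az. destruct (Hc z Az) as [Uz|Vz].
    - rewrite g1 by auto. rewrite Rmult_0_r, cos_0, sin_0; auto.
    - rewrite g2 by auto. rewrite Rmult_1_r, cos_2PI, sin_2PI; auto. }
  pose proof (frontier_integer_const P p q g Po HP Pp gc gZ a1 a2 Aa1 Aa2) as E.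
  rewrite g1, g2 in E by auto. lra.
Qed.

(* For a separation (U, V) of C, an open neighbourhood of C /\ U whose
   closure misses C /\ V: the union of the balls B(z, r/3) over the points
   z of C /\ U with B(z, r) inside U. *)
Lemma separating_neighbourhood (C U V : Cplx -> Prop) : is_open U -> is_open V ->
  (forall z, C z -> U z -> V z -> False) ->
  exists G, is_open G /\ (forall z, C z -> U z -> G z) /\
    (forall w, C w -> V w -> ~ closure G w).
Proof.
intros HU HV Hd.
exists (fun x => exists z r, C z /\ U z /\ 0 < r /\ (forall y, cdist z y < r -> U y) /\
  cdist z x < r / 3). repeat split.
- intros x [z [r [Cz [Uz [Hr [Hr' Hx]]]]]]. exists (r / 3 - cdist z x). split; [lra|].
  intros w Hw. exists z, r. do 4 (split; auto). pose proof (cdist_tri z x w). lra.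
- intros z Cz Uz. destruct (HU z Uz) as [r [Hr Hr']]. exists z, r. do 4 (split; auto).
  rewrite cdist_refl. lra.
- intros w Cw Vw Hcl. destruct (HV w Vw) as [s [Hs Hs']].
  destruct (Hcl (s / 3)) as [x [[z [r [Cz [Uz [Hr [Hr' Hx]]]]]] Hwx]]; [lra|].
  pose proof (cdist_tri z x w) as T. rewrite (cdist_sym x w) in T.
  destruct (Rle_lt_dec s r).
  + apply (Hd w Cw); auto. apply Hr'. lra.
  + apply (Hd z Cz Uz). apply Hs'. rewrite cdist_sym. lra.
Qed.

Lemma frontier_separates (W : Cplx -> Prop) p q : is_open W -> W q -> ~ closure W p ->
  ~ component (fun z => ~ frontier W z) p q.
Proof.
intros Wo Wq Hp [K [KA [HK [Kp Kq]]]]. apply HK.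
exists W, (fun z => ~ closure W z). repeat split; auto.
- apply closure_closed.
- intros z Kz. destruct (classic (W z)); auto. right. intro Hcl. apply (KA z Kz). split; auto.
- exists q; auto.
- exists p; auto.
- intros z _ Wz Hn. apply Hn, closure_incl; auto.
Qed.

(* The direct direction: with (U, V) separating C at p and q, the frontier
   of the component at q of the complement of the closure of the component
   at p of a separating neighbourhood of C /\ U works. *)
Lemma disconnected_has_cut (C : Cplx -> Prop) : ~ connected C ->
  exists A, is_closed A /\ connected A /\ disconnects A C.
Proof.
intros HC.
destruct (NNPP _ HC) as [U [V [HU [HV [Hc [[p [Cp Up]] [[q [Cq Vq]] Hd]]]]]]].
destruct (separating_neighbourhood C U V HU HV Hd) as [G [Go [CUG CVG]]].
set (P := component G p). set (W := component (fun z => ~ closure P z) q).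
assert (Pp : P p) by (apply component_self; auto).
assert (Po : is_open P) by (apply component_open; auto).
assert (Wo : is_open W) by (apply component_open, closure_closed).
assert (Wq : W q).
{ apply component_self. intro Hq. apply (CVG q Cq Vq).
  apply (closure_mono P); auto. intros; eapply component_sub; eauto. }
assert (AC : forall z, frontier W z -> C z -> False).
{ intros z Az Cz. pose proof (frontier_in_closure P q z Az) as Pz.
  destruct (Hc z Cz) as [Uz|Vz].
  - apply (open_misses_closure_component P q z Po); [|apply Az].
    exact (component_closure_in G p z Go (CUG z Cz Uz) Pz).
  - apply (CVG z Cz Vz). apply (closure_mono P); auto. intros; eapply component_sub; eauto. }
exists (frontier W). split; [apply frontier_closed; auto|].
split; [apply frontier_component_connected with p; auto; apply component_connected|].
unfold disconnects. split; [intros z Cz Az; exact (AC z Az Cz)|].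
assert (nAp : ~ frontier W p) by (intro; eapply AC; eauto).
assert (nAq : ~ frontier W q) by (intro; eapply AC; eauto).
exists (component (fun z => ~ frontier W z) p), (component (fun z => ~ frontier W z) q).
repeat split.
- exists p. split; auto. intros; tauto.
- exists q. split; auto. intros; tauto.
- intro Heq. apply (frontier_separates W p q Wo Wq (open_misses_closure_component P q p Po Pp)).
  apply Heq. apply component_self; auto.
- exists p. split; auto. apply component_self; auto.
- exists q. split; auto. apply component_self; auto.
Qed.

Theorem lemma3p1 (C : Cplx -> Prop) :
  ~ connected C <->
  exists A : Cplx -> Prop, is_closed A /\ connected A /\ disconnects A C.
Proof.
split.
- apply disconnected_has_cut.
- intros [A [HA [_ HD]]]. exact (disconnects_disconnected C A HA HD).
Qed.
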